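(* Let $\mathbb F$ be an algebraically closed field, $m\ge1$, and $L:\mathbb F\to\mathbb F^{m+1}$, $x\mapsto(x,x^3,x^9,\dots,x^{3^m})$, so $L_i(z)=z^{3^i}$ for $0\le i\le m$. Then for any $e_1,\dots,e_{m-1}\in\mathbb Q_{\ge0}$ there is some $i\in\{0,\dots,m\}$ with $z^{3^i}\notin 2\text{-}\mathrm{span}(z^{e_1},\dots,z^{e_{m-1}})$.
   Context: $z$ is an indeterminate, and for $e\in\mathbb Q_{\ge0}$, $z^e$ denotes an element of $\overline{\mathbb F(z)}$ from a fixed compatible system of fractional powers (so $z^1=z$, $z^0=1$, $z^ez^{e'}=z^{e+e'}$). For $p_1,\dots,p_r\in\overline{\mathbb F(z)}$, $2\text{-}\mathrm{span}(p_1,\dots,p_r)$ is the $\mathbb F$-linear span of all products $p_1^{a_1}\cdots p_r^{a_r}$ with $a_i\in\mathbb N$, $\sum_ia_i\le 2$. *)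

From HB Require Import structures.
From mathcomp Require Import all_boot all_order all_algebra.
Set Implicit Arguments. Unset Strict Implicit. Unset Printing Implicit Defensive.
Import Order.TTheory GRing.Theory Num.Theory.
Local Open Scope ring_scope.

(* 2-span(p_1,...,p_r): the F-linear span (F embedded in K via iota) of all
   products p_1^{a_1} ... p_r^{a_r} with a_i in N and sum a_i <= 2.
   (Each a_i <= 2, so exponent vectors range over {ffun 'I_r -> 'I_3}.) *)
Definition two_span (F K : fieldType) (iota : {rmorphism F -> K})
    (r : nat) (p : 'I_r -> K) (x : K) : Prop :=
  exists c : {ffun 'I_r -> 'I_3} -> F,
    x = \sum_(a : {ffun 'I_r -> 'I_3} | (\sum_(i < r) (a i : nat) <= 2)%N)
          iota (c a) * \prod_(i < r) p i ^+ a i.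

Definition transcendental_over (F K : fieldType) (iota : {rmorphism F -> K})
    (z : K) : Prop :=
  forall q : {poly F}, (map_poly iota q).[z] = 0 -> q = 0.

(* pw e = z^e for e in Q_{>=0}: a compatible system of fractional powers. *)
Definition frac_powers (K : fieldType) (z : K) (pw : rat -> K) : Prop :=
  [/\ pw 1 = z, pw 0 = 1 &
      forall e e' : rat, 0 <= e -> 0 <= e' -> pw (e + e') = pw e * pw e'].

From HB Require Import structures.
From mathcomp Require Import all_boot all_order all_algebra.
From Stdlib Require Import Classical.
Set Implicit Arguments. Unset Strict Implicit. Unset Printing Implicit Defensive.
Import Order.TTheory GRing.Theory Num.Theory.
Local Open Scope ring_scope.

(* Write e_j = k_j / N over a common
   denominator N > 0 and put w = z^(1/N); then w^N = z, so w is again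
   transcendental, and z^(e_j) = w^(k_j).  Transcendence of w turns the
   relation "w^(N 3^i) is a combination of monomials prod_j w^(k_j a_j)"
   into an equality of exponents: N 3^i = sum_j k_j a_j for some exponent
   vector a with sum_j a_j <= 2.  Such a sum has a term with
   N 3^i <= 2 k_j <= 2 N 3^i, and one weight k_j cannot serve two distinct
   powers of 3 in this way.  Hence the m+1 indices i inject into the m-1
   indices j, which is absurd. *)

(* A root of a transcendental element is transcendental: if q(w) = 0 then
   w = iota x for a root x of q, and X - x^N would vanish at z = w^N. *)
Lemma transcendental_root (F K : closedFieldType) (iota : {rmorphism F -> K})
    (z w : K) (N : nat) :
  transcendental_over iota z -> w ^+ N = z -> transcendental_over iota w.
Proof.
move=> hz wNz q qw0; have [//|q_neq0] := eqVneq q 0.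
move: qw0; have [r ->] := closed_field_poly_normal q.
rewrite map_polyZ rmorph_prod hornerZ horner_prod.
move/eqP; rewrite mulf_eq0 fmorph_eq0 lead_coef_eq0 (negbTE q_neq0) /=.
rewrite prodf_seq_eq0 => /hasP [x _ /=].
rewrite rmorphB /= map_polyX map_polyC hornerXsubC subr_eq0 => /eqP w_eq.
have := hz ('X - (x ^+ N)%:P).
rewrite rmorphB /= map_polyX map_polyC hornerXsubC /= rmorphXn -w_eq wNz subrr.
by move=> /(_ erefl) /eqP; rewrite polyXsubC_eq0.
Qed.

Lemma common_denominator (n : nat) (e : 'I_n -> rat) :
  (forall j, 0 <= e j) ->
  exists2 N : nat, (0 < N)%N & forall j, exists k : nat, e j = k%:R / N%:R.
Proof.
move=> e_ge0; have den_gt0 i : (0 < `|denq (e i)|)%N by rewrite absz_gt0 denq_neq0.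
exists (\prod_j `|denq (e j)|)%N; first by rewrite prodn_gt0.
move=> j; rewrite (bigD1 j) //=; set M := (\prod_(i | i != j) _)%N.
have M_gt0 : (0 < M)%N by rewrite prodn_gt0.
exists (`|numq (e j)| * M)%N.
rewrite !natrM invfM mulrACA divff ?pnatr_eq0 -?lt0n // mulr1.
have := divq_num_den (e j).
by rewrite -[numq _]gez0_abs ?numq_ge0 // -[denq _]gtz0_abs ?denq_gt0.
Qed.

Lemma frac_powers_multiple (K : fieldType) (z : K) (pw : rat -> K) (N k : nat) :
  frac_powers z pw -> pw (k%:R / N%:R) = pw (N%:R^-1) ^+ k.
Proof.
case=> _ pw0 pwD; elim: k => [|k IHk]; first by rewrite mul0r pw0 expr0.
rewrite -addn1 natrD mulrDl pwD ?IHk ?mul1r ?exprD ?expr1 //.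
  by rewrite divr_ge0 ?ler0n.
by rewrite invr_ge0 ler0n.
Qed.

(* The exponent vectors of the 2-span, and the degree of the corresponding
   monomial prod_i (w^(k_i))^(a_i) = w^(sum_i k_i a_i). *)
Definition short_exponent (r : nat) (a : {ffun 'I_r -> 'I_3}) : bool :=
  (\sum_(i < r) (a i : nat) <= 2)%N.

Definition weighted_degree (r : nat) (k : 'I_r -> nat) (a : {ffun 'I_r -> 'I_3}) :=
  (\sum_(i < r) k i * a i)%N.

(* Over a transcendental w, w^M lies in the 2-span of p_i = w^(k_i)
   only if M is the degree of one of the monomials: otherwise the relation is
   a nonzero polynomial (its coefficient of X^M is 1) vanishing at w. *)
Lemma two_span_monomial_degree (F K : fieldType) (iota : {rmorphism F -> K})
    (w : K) (r : nat) (p : 'I_r -> K) (k : 'I_r -> nat) (M : nat) :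
  transcendental_over iota w -> (forall i, p i = w ^+ k i) ->
  two_span iota p (w ^+ M) ->
  exists2 a : {ffun 'I_r -> 'I_3}, short_exponent a & weighted_degree k a = M.
Proof.
move=> hw p_eq [c wM_eq].
have [/existsP [a /andP [a_short /eqP a_deg]]|no_deg] :=
  boolP [exists a, short_exponent a && (weighted_degree k a == M)].
  by exists a.
pose q := 'X^M - \sum_(a | short_exponent a) (c a)%:P * 'X^(weighted_degree k a).
have q_eq0 : q = 0.
  apply: hw; rewrite rmorphB rmorph_sum /= hornerD hornerN horner_sum.
  rewrite map_polyXn hornerXn; apply/eqP; rewrite subr_eq0 wM_eq.
  apply/eqP/eq_bigr => a _.
  rewrite rmorphM /= map_polyC map_polyXn hornerCM hornerXn -prodrXr.
  by congr (_ * _); apply: eq_bigr => i _; rewrite p_eq exprM.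
have := congr1 (fun p : {poly F} => p`_M) q_eq0.
rewrite /q coefB coefXn eqxx coef_sum coef0 big1 ?subr0 => [/eqP|a a_short].
  by rewrite oner_eq0.
have deg_neq : weighted_degree k a != M.
  by apply: contra no_deg => deg_eq; apply/existsP; exists a; rewrite a_short.
by rewrite coefCM coefXn eq_sym (negbTE deg_neq) mulr0.
Qed.

Lemma short_sum_large_term (r : nat) (k : 'I_r -> nat) (a : {ffun 'I_r -> 'I_3})
    (S : nat) :
  short_exponent a -> weighted_degree k a = S -> (0 < S)%N ->
  exists j, (S <= 2 * k j <= 2 * S)%N.
Proof.
move=> a_short a_deg S_gt0.
have [/existsP [j /andP [aj_gt0 Skj]]|/existsPn no_large] :=
  boolP [exists j, (0 < a j)%N && (S <= 2 * k j)%N].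
  exists j; rewrite Skj leq_mul2l /= -a_deg /weighted_degree (bigD1 j) //.
  by apply: leq_trans (leq_addr _ _); rewrite leq_pmulr.
have small_terms : (2 * S <= (\sum_(i < r) (a i : nat)) * S.-1)%N.
  rewrite -{1}a_deg /weighted_degree big_distrr big_distrl /=; apply: leq_sum => j _.
  move: (no_large j); rewrite negb_and -leqNgt -ltnNge.
  case/orP=> [|kj_small]; first by rewrite leqn0 => /eqP ->; rewrite !muln0.
  by rewrite mulnA [X in (_ <= X)%N]mulnC leq_mul2r -ltnS prednK // kj_small orbT.
have := leq_trans small_terms (leq_mul a_short (leqnn S.-1)).
by rewrite leq_mul2l /= -ltnS prednK // ltnn.
Qed.

(* If every power N 3^i (i <= m) has some weight k_j with
   N 3^i <= 2 k_j <= 2 N 3^i, then there are at least m+1 weights: a weight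
   serving 3^a and 3^b forces 3^a <= 2 3^b, hence a <= b, and symmetrically. *)
Lemma powers_of_three_windows (m n N : nat) (k : 'I_n -> nat) :
  (0 < N)%N ->
  (forall i : 'I_m.+1, exists j, (N * 3 ^ i <= 2 * k j <= 2 * (N * 3 ^ i))%N) ->
  (m.+1 <= n)%N.
Proof.
move=> N_gt0 windows; have [g g_window] := fin_all_exists windows.
have pow3_le a b : (N * 3 ^ a <= 2 * (N * 3 ^ b))%N -> (a <= b)%N.
  rewrite mulnCA leq_pmul2l // => le_ab.
  rewrite -ltnS -(ltn_exp2l _ _ (isT : (1 < 3)%N)).
  by apply: leq_ltn_trans le_ab _; rewrite expnS ltn_mul2r expn_gt0.
have g_inj : injective g.
  move=> i1 i2 g12; apply/val_inj/eqP; rewrite eqn_leq.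
  move: (g_window i1) (g_window i2); rewrite g12 => /andP [lo1 hi1] /andP [lo2 hi2].
  by rewrite (pow3_le _ _ (leq_trans lo1 hi2)) (pow3_le _ _ (leq_trans lo2 hi1)).
by have := leq_card g g_inj; rewrite !card_ord.
Qed.

Theorem proposition9p7 (F : closedFieldType) (K : closedFieldType)
    (iota : {rmorphism F -> K}) (z : K) (pw : rat -> K)
    (hz : transcendental_over iota z) (hpw : frac_powers z pw)
    (m : nat) (hm : (1 <= m)%N)
    (e : 'I_m.-1 -> rat) (he : forall j, 0 <= e j) :
  exists i : 'I_m.+1,
    ~ two_span iota (fun j : 'I_m.-1 => pw (e j)) (z ^+ (3 ^ i)%N).
Proof.
apply: not_all_ex_not => all_in_span.
have [N N_gt0 /fin_all_exists [k e_eq]] := common_denominator he.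
pose w := pw (N%:R^-1).
have pw_e j : pw (e j) = w ^+ k j by rewrite e_eq (frac_powers_multiple _ _ hpw).
have wN : w ^+ N = z.
  by rewrite -(frac_powers_multiple _ _ hpw) divff ?pnatr_eq0 -?lt0n //; case: hpw.
have hw := transcendental_root hz wN.
suff : (m.+1 <= m.-1)%N by rewrite ltnNge (leq_trans (leq_pred m)).
apply: (powers_of_three_windows N_gt0) => i.
have := all_in_span i; rewrite -wN -exprM.
move=> /(two_span_monomial_degree hw pw_e) [a a_short a_deg].
by apply: short_sum_large_term a_short a_deg _; rewrite muln_gt0 N_gt0 expn_gt0.
Qed.
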